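(* Let $(X,T)$ be a compact Hausdorff flow such that every point of $X$ is almost automorphic. Then the enveloping semigroup $\mathcal E(X,T)$ is a group, and the group inversion $g\mapsto g^{-1}$ is a continuous map from $\mathcal E(X,T)$ onto $\mathcal E(X,T)$ with respect to the product topology on $X^X$.
   Context: $X$ compact Hausdorff, $T$ a topological group acting continuously on $X$. A point $x$ is almost automorphic if for every net $\{t_i\}\subset T$ with $t_ix\to y$ it holds that $t_i^{-1}y\to x$. The enveloping semigroup $\mathcal E(X,T)$ is the closure of $T$ in $X^X$ with the product topology, with composition as operation. *)

From Stdlib Require Import List Classical FunctionalExtensionality.
Import ListNotations.
Set Implicit Arguments.

Record Topology (X : Type) := {
  is_open : (X -> Prop) -> Prop;
  open_full : is_open (fun _ => True);
  open_inter : forall U V, is_open U -> is_open V -> is_open (fun x => U x /\ V x);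
  open_union : forall F : (X -> Prop) -> Prop,
      (forall U, F U -> is_open U) -> is_open (fun x => exists U, F U /\ U x)
}.
Arguments is_open {X} t U.

Definition compact {X} (t : Topology X) : Prop :=
  forall F : (X -> Prop) -> Prop,
    (forall U, F U -> is_open t U) ->
    (forall x, exists U, F U /\ U x) ->
    exists l : list (X -> Prop),
      (forall U, In U l -> F U) /\ (forall x, exists U, In U l /\ U x).

Definition hausdorff {X} (t : Topology X) : Prop :=
  forall x y, x <> y ->
    exists U V, is_open t U /\ is_open t V /\ U x /\ V y /\
                forall z, ~ (U z /\ V z).

Definition continuous {A B} (tA : Topology A) (tB : Topology B) (f : A -> B) : Prop :=
  forall a W, is_open tB W -> W (f a) ->
    exists U, is_open tA U /\ U a /\ forall a', U a' -> W (f a').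

Definition jointly_continuous {A B C} (tA : Topology A) (tB : Topology B)
    (tC : Topology C) (f : A -> B -> C) : Prop :=
  forall a b W, is_open tC W -> W (f a b) ->
    exists U V, is_open tA U /\ is_open tB V /\ U a /\ V b /\
      forall a' b', U a' -> V b' -> W (f a' b').

Record TopGroup := {
  carrier :> Type;
  gmul : carrier -> carrier -> carrier;
  ginv : carrier -> carrier;
  gone : carrier;
  gmulA : forall a b c, gmul a (gmul b c) = gmul (gmul a b) c;
  gmul1l : forall a, gmul gone a = a;
  gmul1r : forall a, gmul a gone = a;
  gmulVl : forall a, gmul (ginv a) a = gone;
  gmulVr : forall a, gmul a (ginv a) = gone;
  gtop : Topology carrier;
  gmul_cont : jointly_continuous gtop gtop gtop gmul;
  ginv_cont : continuous gtop gtop ginv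
}.

Definition continuous_action (T : TopGroup) {X} (tX : Topology X)
    (act : T -> X -> X) : Prop :=
  (forall x, act (gone T) x = x) /\
  (forall g h x, act (gmul T g h) x = act g (act h x)) /\
  jointly_continuous (gtop T) tX tX act.

Definition directed {D : Type} (le : D -> D -> Prop) : Prop :=
  inhabited D /\
  (forall i, le i i) /\
  (forall i j k, le i j -> le j k -> le i k) /\
  (forall i j, exists k, le i k /\ le j k).

Definition net_converges {D X} (le : D -> D -> Prop) (tX : Topology X)
    (s : D -> X) (y : X) : Prop :=
  forall U, is_open tX U -> U y ->
    exists i0, forall i, le i0 i -> U (s i).

Definition almost_automorphic (T : TopGroup) {X} (tX : Topology X)
    (act : T -> X -> X) (x : X) : Prop :=
  forall (D : Type) (le : D -> D -> Prop) (t : D -> T) (y : X),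
    directed le ->
    net_converges le tX (fun i => act (t i) x) y ->
    net_converges le tX (fun i => act (ginv T (t i)) y) x.

(** Product (pointwise-convergence) topology on X^X = X -> X:
    W is open iff around each of its points it contains a basic open set
    { g | g x_k \in U_k for k = 1..n } with the U_k open. *)
Definition pw_open {X} (tX : Topology X) (W : (X -> X) -> Prop) : Prop :=
  forall f, W f ->
    exists l : list (X * (X -> Prop)),
      (forall xu, In xu l -> is_open tX (snd xu) /\ snd xu (f (fst xu))) /\
      (forall g, (forall xu, In xu l -> snd xu (g (fst xu))) -> W g).

Definition pw_closure {X} (tX : Topology X) (S : (X -> X) -> Prop) (f : X -> X) : Prop :=
  forall W, pw_open tX W -> W f -> exists g, S g /\ W g.

Definition enveloping (T : TopGroup) {X} (tX : Topology X) (act : T -> X -> X)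
    : (X -> X) -> Prop :=
  pw_closure tX (fun p => exists g : T, forall x, p x = act g x).

(** Every p ∈ E is the pointwise limit of a net t_i in T, indexed by the basic
    neighbourhoods of p.  Almost automorphy gives t_i^{-1}(p x) → x, hence p is
    injective; for z ∈ X a cluster point w of t_i^{-1} z (compactness) satisfies
    p w = z, via a subnet along which t_i^{-1} z → w, hence p is surjective.
    The inverse map [einv p] then lies in E, because an element t_i that
    approximates p on finitely many points has t_i^{-1} approximating [einv p].
    Closure of E under composition uses the joint continuity of the action.
    Continuity of inversion on E is proved by contradiction: otherwise there is
    a net t_i → p whose inverses keep t_i^{-1} z outside a neighbourhood of
    [einv p z], while every cluster point of t_i^{-1} z must equal [einv p z];
    the regularity of compact Hausdorff spaces supplies the neighbourhoods. *)

From Stdlib Require Import List Classical FunctionalExtensionality ClassicalEpsilon.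
Import ListNotations.

Definition basic {X} (l : list (X * (X -> Prop))) (g : X -> X) : Prop :=
  forall xu, In xu l -> snd xu (g (fst xu)).

Definition basic_nbhd {X} (tX : Topology X) (l : list (X * (X -> Prop))) (p : X -> X)
  : Prop :=
  forall xu, In xu l -> is_open tX (snd xu) /\ snd xu (p (fst xu)).

Lemma basic_open {X} (tX : Topology X) (l : list (X * (X -> Prop))) :
  (forall xu, In xu l -> is_open tX (snd xu)) -> pw_open tX (basic l).
Proof.
  intros Hl f Hf. exists l. split; [|auto].
  intros xu Hin. split; auto.
Qed.

Lemma basic_nbhd_app {X} (tX : Topology X) l1 l2 (p : X -> X) :
  basic_nbhd tX l1 p -> basic_nbhd tX l2 p -> basic_nbhd tX (l1 ++ l2) p.
Proof. intros H1 H2 xu Hin. apply in_app_or in Hin as [Hin|Hin]; auto. Qed.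

Lemma basic_app {X} (l1 l2 : list (X * (X -> Prop))) (g : X -> X) :
  basic (l1 ++ l2) g -> basic l1 g /\ basic l2 g.
Proof. intros H. split; intros xu Hin; apply H, in_or_app; auto. Qed.

Definition eventually {D} (le : D -> D -> Prop) (P : D -> Prop) : Prop :=
  exists i0, forall i, le i0 i -> P i.

Lemma eventually_and {D} (le : D -> D -> Prop) (P Q : D -> Prop) :
  directed le -> eventually le P -> eventually le Q ->
  eventually le (fun i => P i /\ Q i).
Proof.
  intros [_ [_ [Htr Hub]]] [a Ha] [b Hb].
  destruct (Hub a b) as [k [Hak Hbk]].
  exists k. intros i Hi. split; [apply Ha | apply Hb]; eapply Htr; eauto.
Qed.

Lemma eventually_list {D} (le : D -> D -> Prop) {A} (l : list A) (P : A -> D -> Prop) :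
  directed le -> (forall a, In a l -> eventually le (P a)) ->
  eventually le (fun i => forall a, In a l -> P a i).
Proof.
  intros Hd. induction l as [|a l IH]; intros H.
  - destruct Hd as [[i0] _]. exists i0. intros i _ a [].
  - destruct (eventually_and le _ _ Hd (H a (or_introl eq_refl))
                (IH (fun b Hb => H b (or_intror Hb)))) as [k Hk].
    exists k. intros i Hi b [<-|Hb]; apply Hk in Hi as [Ha Hl]; auto.
Qed.

Lemma eventually_witness {D} (le : D -> D -> Prop) (P : D -> Prop) :
  directed le -> eventually le P -> exists i, P i.
Proof. intros [_ [Hrefl _]] [i0 Hi]. exists i0. apply Hi, Hrefl. Qed.

Lemma limit_unique {D X} (le : D -> D -> Prop) (tX : Topology X) (s : D -> X) y1 y2 :
  hausdorff tX -> directed le ->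
  net_converges le tX s y1 -> net_converges le tX s y2 -> y1 = y2.
Proof.
  intros Hh Hd H1 H2. apply NNPP; intro Hne.
  destruct (Hh _ _ Hne) as [U [V [HU [HV [HUy [HVy Hdis]]]]]].
  destruct (eventually_witness le _ Hd
              (eventually_and le _ _ Hd (H1 U HU HUy) (H2 V HV HVy))) as [k Hk].
  exact (Hdis (s k) Hk).
Qed.

Lemma net_ext {D X} (le : D -> D -> Prop) (tX : Topology X) (s s' : D -> X) y :
  (forall i, s i = s' i) -> net_converges le tX s y -> net_converges le tX s' y.
Proof.
  intros He H U HU Hy. destruct (H U HU Hy) as [i0 Hi].
  exists i0. intros i Hi'. rewrite <- He. auto.
Qed.

Definition cluster_point {D X} (le : D -> D -> Prop) (tX : Topology X) (s : D -> X) (w : X)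
  : Prop :=
  forall i U, is_open tX U -> U w -> exists j, le i j /\ U (s j).

Lemma compact_cluster_point {D X} (le : D -> D -> Prop) (tX : Topology X) (s : D -> X) :
  compact tX -> directed le -> exists w, cluster_point le tX s w.
Proof.
  intros Hc Hd. apply NNPP; intro Hn.
  set (F := fun U : X -> Prop => is_open tX U /\ eventually le (fun j => ~ U (s j))).
  destruct (Hc F) as [l [Hl Hcov]].
  - intros U [HU _]; exact HU.
  - intros x. apply NNPP; intro Hx. apply Hn. exists x. intros i U HU HUx.
    apply NNPP; intro Hj. apply Hx. exists U. split; [|exact HUx]. split; [exact HU|].
    exists i. intros j Hij HUj. apply Hj. exists j; auto.
  - destruct (eventually_witness le _ Hd
                (eventually_list le l (fun U i => ~ U (s i)) Hd
                   (fun U HU => proj2 (Hl U HU)))) as [k Hk].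
    destruct (Hcov (s k)) as [U [HU HUs]]. exact (Hk U HU HUs).
Qed.

(** Index set of the subnet converging to a cluster point [w] of [s]: an index
    [i], an open neighbourhood [N] of [w], and some [j ≥ i] with [s j ∈ N]. *)
Record cluster_index {D X : Type} (le : D -> D -> Prop) (tX : Topology X) (s : D -> X)
    (w : X) := ClusterIndex {
  ci_i : D; ci_N : X -> Prop; ci_j : D;
  ci_open : is_open tX ci_N; ci_w : ci_N w; ci_le : le ci_i ci_j; ci_in : ci_N (s ci_j) }.
Arguments ci_i {D X le tX s w}.
Arguments ci_N {D X le tX s w}.
Arguments ci_j {D X le tX s w}.
Arguments ci_open {D X le tX s w}.
Arguments ci_w {D X le tX s w}.
Arguments ci_le {D X le tX s w}.
Arguments ci_in {D X le tX s w}.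

Definition cluster_le {D X} (le : D -> D -> Prop) (tX : Topology X) (s : D -> X) w
    (a b : cluster_index le tX s w) : Prop :=
  le (ci_i a) (ci_i b) /\ forall y, ci_N b y -> ci_N a y.

Lemma cluster_subnet {D X} (le : D -> D -> Prop) (tX : Topology X) (s : D -> X) w :
  directed le -> cluster_point le tX s w ->
  exists (D' : Type) (le' : D' -> D' -> Prop) (phi : D' -> D),
    directed le' /\ net_converges le' tX (fun a => s (phi a)) w /\
    forall P, eventually le P -> eventually le' (fun a => P (phi a)).
Proof.
  intros Hd Hcl. pose proof Hd as [[i0] [Hrefl [Htr Hub]]].
  pose (trivial_index := fun i =>
          @ClusterIndex D X le tX s w i (fun _ => True) i (open_full tX) I (Hrefl i) I).
  exists (cluster_index le tX s w), (cluster_le le tX s w), ci_j. split; [|split].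
  - split; [|split; [|split]].
    + constructor. exact (trivial_index i0).
    + intros a. split; auto.
    + intros a b c [H1 H2] [H3 H4]. split; eauto.
    + intros a b. destruct (Hub (ci_i a) (ci_i b)) as [k [Hak Hbk]].
      assert (Ho : is_open tX (fun y => ci_N a y /\ ci_N b y))
        by (apply open_inter; apply ci_open).
      destruct (Hcl k _ Ho (conj (ci_w a) (ci_w b))) as [j [Hkj Hj]].
      exists (@ClusterIndex D X le tX s w k _ j Ho (conj (ci_w a) (ci_w b)) Hkj Hj).
      split; split; simpl; auto; intros y [? ?]; auto.
  - intros U HU HUw. destruct (Hcl i0 U HU HUw) as [j [Hj HUj]].
    exists (@ClusterIndex D X le tX s w i0 U j HU HUw Hj HUj).
    intros a [_ Ha]. apply Ha, ci_in.
  - intros P [k Hk]. exists (trivial_index k). intros a [Ha _]. apply Hk.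
    eapply Htr; [exact Ha | apply ci_le].
Qed.

(** Every neighbourhood [U] of [x] contains a neighbourhood [U'] of [x] whose
    closure lies in [U]: each point outside [U] has a neighbourhood disjoint
    from [U']. *)
Lemma compact_hausdorff_regular {X} (tX : Topology X) x U :
  compact tX -> hausdorff tX -> is_open tX U -> U x ->
  exists U', is_open tX U' /\ U' x /\
    forall y, ~ U y -> exists N, is_open tX N /\ N y /\ forall y', N y' -> ~ U' y'.
Proof.
  intros Hc Hh HU HUx.
  set (separated := fun N : X -> Prop =>
         exists A, is_open tX A /\ A x /\ forall y', N y' -> ~ A y').
  set (F := fun N : X -> Prop => is_open tX N /\ (N = U \/ separated N)).
  destruct (Hc F) as [l [Hl Hcov]].
  - intros N [HN _]; exact HN.
  - intros y. destruct (classic (U y)) as [Hy|Hy].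
    + exists U. split; auto. split; auto.
    + assert (Hne : x <> y) by (intro; subst; auto).
      destruct (Hh x y Hne) as [A [B [HA [HB [HAx [HBy Hdis]]]]]].
      exists B. split; auto. split; auto. right. exists A. split; auto. split; auto.
      intros y' HB' HA'. exact (Hdis y' (conj HA' HB')).
  - (* intersect the separating neighbourhoods of [x] over the finite subcover *)
    assert (Hmeet : forall l0, (forall N, In N l0 -> F N) ->
       exists U', is_open tX U' /\ U' x /\
         forall N, In N l0 -> N = U \/ forall y', N y' -> ~ U' y').
    { induction l0 as [|N l0 IH]; intros H.
      - exists (fun _ => True). split; [apply open_full|]. split; [exact I| intros N []].
      - destruct IH as [U' [HU' [HU'x HU'l]]]. { intros; apply H; simpl; auto. }
        destruct (H N (or_introl eq_refl)) as [_ [HNU | [A [HA [HAx HAN]]]]].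
        + exists U'. split; auto. split; auto. intros N' [<-|Hin]; auto.
        + exists (fun y => A y /\ U' y). split; [apply open_inter; auto|]. split; auto.
          intros N' [<-|Hin].
          * right. intros y' HN' [HA' _]. exact (HAN y' HN' HA').
          * destruct (HU'l N' Hin) as [?|Hd]; auto. right. intros y' HN' [_ HU''].
            exact (Hd y' HN' HU''). }
    destruct (Hmeet l Hl) as [U' [HU' [HU'x HU'l]]].
    exists U'. split; auto. split; auto.
    intros y Hy. destruct (Hcov y) as [N [Hin HNy]].
    exists N. split; [apply (Hl N Hin)|]. split; auto.
    destruct (HU'l N Hin) as [Heq|Hd]; auto. subst N. contradiction.
Qed.

Lemma ginv_ginv (T : TopGroup) (g : T) : ginv T (ginv T g) = g.
Proof.
  rewrite <- (gmul1r T (ginv T (ginv T g))), <- (gmulVl T g), gmulA, gmulVl.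
  apply gmul1l.
Qed.

Section Enveloping.

Variables (T : TopGroup) (X : Type) (tX : Topology X) (act : T -> X -> X).
Hypothesis hcomp : compact tX.
Hypothesis hhaus : hausdorff tX.
Hypothesis haa : forall x : X, almost_automorphic T tX act x.

Local Notation E := (enveloping T tX act).

Lemma E_act (g : T) : E (act g).
Proof. intros W _ HW. exists (act g). split; auto. exists g. reflexivity. Qed.

Lemma E_basic p l : E p -> basic_nbhd tX l p -> exists g, basic l (act g).
Proof.
  intros HE Hl.
  destruct (HE (basic l)) as [g' [[g Hg] Hb]].
  - apply basic_open. intros xu H; apply (Hl xu H).
  - intros xu H; apply (Hl xu H).
  - exists g. intros xu H. rewrite <- Hg. apply Hb; auto.
Qed.

Definition nbhd_index (p : X -> X) := { l : list (X * (X -> Prop)) | basic_nbhd tX l p }.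
Definition nbhd_le p (a b : nbhd_index p) : Prop := incl (proj1_sig a) (proj1_sig b).

Lemma nbhd_le_directed p : directed (nbhd_le p).
Proof.
  split; [|split; [|split]].
  - constructor. exists nil. intros xu [].
  - intros i. apply incl_refl.
  - intros i j k. apply incl_tran.
  - intros [l1 H1] [l2 H2].
    exists (exist _ (l1 ++ l2) (basic_nbhd_app tX l1 l2 p H1 H2)).
    unfold nbhd_le; simpl. split; [apply incl_appl | apply incl_appr]; apply incl_refl.
Qed.

Lemma nbhd_net p (Q : T -> Prop) :
  (forall m, basic_nbhd tX m p -> exists g, basic m (act g) /\ Q g) ->
  exists t : nbhd_index p -> T,
    (forall x, net_converges (nbhd_le p) tX (fun i => act (t i) x) (p x)) /\
    forall i, Q (t i).
Proof.
  intros H.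
  pose (choice (i : nbhd_index p) := constructive_indefinite_description _ (H (proj1_sig i) (proj2_sig i))).
  exists (fun i => proj1_sig (choice i)). split.
  - intros x U HU HUx.
    assert (Hn : basic_nbhd tX [(x, U)] p) by (intros xu [<-|[]]; simpl; auto).
    exists (exist _ [(x,U)] Hn). intros i Hi.
    apply (proj1 (proj2_sig (choice i)) (x, U)), Hi. simpl; auto.
  - intros i. exact (proj2 (proj2_sig (choice i))).
Qed.

Lemma E_net p :
  E p -> exists t : nbhd_index p -> T,
    forall x, net_converges (nbhd_le p) tX (fun i => act (t i) x) (p x).
Proof.
  intros HE. destruct (nbhd_net p (fun _ => True)) as [t [Ht _]].
  - intros m Hm. destruct (E_basic p m HE Hm) as [g Hg]. exists g; auto.
  - exists t; exact Ht.
Qed.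

Lemma cluster_point_preimage {D} (le : D -> D -> Prop) (t : D -> T) p z w :
  directed le -> (forall x, net_converges le tX (fun i => act (t i) x) (p x)) ->
  cluster_point le tX (fun i => act (ginv T (t i)) z) w -> p w = z.
Proof.
  intros Hd Hc Hcl.
  destruct (cluster_subnet le tX _ w Hd Hcl) as [D' [le' [phi [Hd' [Hconv Hcof]]]]].
  assert (Hback : net_converges le' tX (fun a => act (t (phi a)) w) z).
  { apply (net_ext le' tX (fun a => act (ginv T (ginv T (t (phi a)))) w)).
    - intro a. rewrite ginv_ginv. reflexivity.
    - exact (haa z D' le' (fun a => ginv T (t (phi a))) w Hd' Hconv). }
  assert (Hpw : net_converges le' tX (fun a => act (t (phi a)) w) (p w)).
  { intros U HU HUw. exact (Hcof _ (Hc w U HU HUw)). }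
  exact (limit_unique le' tX _ _ _ hhaus Hd' Hpw Hback).
Qed.

Lemma E_injective p : E p -> forall x x', p x = p x' -> x = x'.
Proof.
  intros Hp x x' Hxx'.
  destruct (E_net p Hp) as [t Hc].
  pose proof (haa x _ _ t (p x) (nbhd_le_directed p) (Hc x)) as K.
  pose proof (haa x' _ _ t (p x') (nbhd_le_directed p) (Hc x')) as K'.
  rewrite Hxx' in K.
  exact (limit_unique _ tX _ _ _ hhaus (nbhd_le_directed p) K K').
Qed.

Lemma E_surjective p : E p -> forall z, exists w, p w = z.
Proof.
  intros Hp z.
  destruct (E_net p Hp) as [t Hc].
  destruct (compact_cluster_point (nbhd_le p) tX (fun i => act (ginv T (t i)) z)
              hcomp (nbhd_le_directed p)) as [w Hw].
  exists w. exact (cluster_point_preimage _ t p z w (nbhd_le_directed p) Hc Hw).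
Qed.

(** The inverse of a bijection, chosen by Hilbert's epsilon. *)
Definition einv (p : X -> X) (z : X) : X := epsilon (inhabits z) (fun w => p w = z).

Lemma einv_right p : E p -> forall z, p (einv p z) = z.
Proof. intros Hp z. unfold einv. apply epsilon_spec, E_surjective, Hp. Qed.

Lemma einv_left p : E p -> forall x, einv p (p x) = x.
Proof. intros Hp x. apply (E_injective p Hp), einv_right, Hp. Qed.

Lemma approx_with_inverse q l1 (l2 : list (X * (X -> Prop))) :
  E q -> basic_nbhd tX l1 q ->
  (forall xu, In xu l2 -> is_open tX (snd xu) /\ snd xu (fst xu)) ->
  exists g, basic l1 (act g) /\
    forall xu, In xu l2 -> snd xu (act (ginv T g) (q (fst xu))).
Proof.
  intros HE H1 H2.
  destruct (E_net q HE) as [t Hc].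
  pose proof (nbhd_le_directed q) as Hd.
  assert (E1 : eventually (nbhd_le q) (fun i => basic l1 (act (t i)))).
  { apply (eventually_list _ l1 (fun xu i => snd xu (act (t i) (fst xu))) Hd).
    intros xu Hin. destruct (H1 xu Hin) as [Ho Hx]. exact (Hc (fst xu) (snd xu) Ho Hx). }
  assert (E2 : eventually (nbhd_le q) (fun i =>
                 forall xu, In xu l2 -> snd xu (act (ginv T (t i)) (q (fst xu))))).
  { apply (eventually_list _ l2 (fun xu i => snd xu (act (ginv T (t i)) (q (fst xu)))) Hd).
    intros xu Hin. destruct (H2 xu Hin) as [Ho Hx].
    exact (haa (fst xu) _ _ t (q (fst xu)) Hd (Hc (fst xu)) (snd xu) Ho Hx). }
  destruct (eventually_witness _ _ Hd (eventually_and _ _ _ Hd E1 E2)) as [k Hk].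
  exists (t k). exact Hk.
Qed.

Lemma E_einv p : E p -> E (einv p).
Proof.
  intros Hp W HW HWi.
  destruct (HW _ HWi) as [l [Hl Hsub]].
  destruct (approx_with_inverse p [] (map (fun xu => (einv p (fst xu), snd xu)) l) Hp)
    as [g [_ Hg]].
  - intros xu [].
  - intros xu Hin. apply in_map_iff in Hin as [xu' [<- Hin]]. simpl. apply Hl; auto.
  - exists (act (ginv T g)). split; [exists (ginv T g); reflexivity|].
    apply Hsub. intros xu Hin.
    pose proof (Hg (einv p (fst xu), snd xu)) as H. simpl in H.
    rewrite (einv_right p Hp) in H. apply H, in_map_iff. exists xu; auto.
Qed.

Lemma einv_involutive q : E q -> einv (einv q) = q.
Proof.
  intros Hq. apply functional_extensionality; intro z.
  apply (E_injective (einv q) (E_einv q Hq)).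
  rewrite (einv_right (einv q) (E_einv q Hq)). symmetry. apply einv_left, Hq.
Qed.

Lemma E_id (hact_one : forall x, act (gone T) x = x) : E (fun x => x).
Proof.
  replace (fun x : X => x) with (act (gone T)); [apply E_act|].
  apply functional_extensionality. exact hact_one.
Qed.

(** Continuity of [f ↦ act g ∘ f] at [q]: a basic neighbourhood of [act g ∘ q]
    is reached from a basic neighbourhood of [q]. *)
Lemma act_compose_basic g q l :
  jointly_continuous (gtop T) tX tX act ->
  (forall xu, In xu l -> is_open tX (snd xu) /\ snd xu (act g (q (fst xu)))) ->
  exists l2, basic_nbhd tX l2 q /\
    forall f, basic l2 f -> forall xu, In xu l -> snd xu (act g (f (fst xu))).
Proof.
  intros Hj. induction l as [|[x U] l IH]; intros H.
  - exists nil. split; [intros xu []|]. intros f _ xu [].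
  - destruct IH as [l2 [H2a H2b]]. { intros xu Hin; apply H; simpl; auto. }
    destruct (H (x,U) (or_introl eq_refl)) as [HU HUx]. simpl in HU, HUx.
    destruct (Hj g (q x) U HU HUx) as [A [V [_ [HV [HAg [HVq Himp]]]]]].
    exists ((x, V) :: l2). split.
    + intros xu [<-|Hin]; [simpl; auto | apply H2a; auto].
    + intros f Hf xu [<-|Hin].
      * simpl. apply Himp; auto. apply (Hf (x,V)); simpl; auto.
      * apply H2b; auto. intros xu' Hin'; apply Hf; simpl; auto.
Qed.

Lemma E_comp (hact_mul : forall g h x, act (gmul T g h) x = act g (act h x))
  (hact_cont : jointly_continuous (gtop T) tX tX act) p q :
  E p -> E q -> E (fun x => p (q x)).
Proof.
  intros Hp Hq W HW HWpq.
  destruct (HW _ HWpq) as [l [Hl Hsub]].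
  assert (Hn : basic_nbhd tX (map (fun xu => (q (fst xu), snd xu)) l) p).
  { intros xu Hin. apply in_map_iff in Hin as [xu' [<- Hin]]. simpl. apply Hl; auto. }
  destruct (E_basic p _ Hp Hn) as [g Hg].
  destruct (act_compose_basic g q l hact_cont) as [l2 [H2a H2b]].
  { intros xu Hin. split; [apply Hl; auto|].
    apply (Hg (q (fst xu), snd xu)). apply in_map_iff. exists xu; auto. }
  destruct (E_basic q l2 Hq H2a) as [h Hh].
  exists (act (gmul T g h)). split; [exists (gmul T g h); reflexivity|].
  apply Hsub. intros xu Hin. rewrite hact_mul. apply H2b; auto.
Qed.

(** If [einv p z ∈ U'] then, near [p], every [g] has [g^{-1} z ∈ U']: otherwise
    a net [t_i → p] keeps [t_i^{-1} z] outside [U'], contradicting that its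
    cluster points equal [einv p z]. *)
Lemma inverse_orbit_near p z U' :
  E p -> is_open tX U' -> U' (einv p z) ->
  exists m, basic_nbhd tX m p /\ forall g, basic m (act g) -> U' (act (ginv T g) z).
Proof.
  intros Hp HU' HU'z. apply NNPP; intro Hneg.
  destruct (nbhd_net p (fun g => ~ U' (act (ginv T g) z))) as [t [Hc Hout]].
  { intros m Hm. apply NNPP; intro Hno. apply Hneg. exists m. split; auto.
    intros g Hg. apply NNPP; intro HnU. apply Hno. exists g. auto. }
  destruct (compact_cluster_point (nbhd_le p) tX (fun i => act (ginv T (t i)) z)
              hcomp (nbhd_le_directed p)) as [w Hw].
  assert (Hwe : w = einv p z).
  { rewrite <- (cluster_point_preimage _ t p z w (nbhd_le_directed p) Hc Hw).
    symmetry. apply einv_left, Hp. }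
  subst w. destruct (nbhd_le_directed p) as [[i0] _].
  destruct (Hw i0 U' HU' HU'z) as [j [_ Hj]]. exact (Hout j Hj).
Qed.

Lemma einv_continuous_at p z U :
  E p -> is_open tX U -> U (einv p z) ->
  exists m, basic_nbhd tX m p /\ forall q, E q -> basic m q -> U (einv q z).
Proof.
  intros Hp HU HUz.
  destruct (compact_hausdorff_regular tX (einv p z) U hcomp hhaus HU HUz)
    as [U' [HU' [HU'z Hsep]]].
  destruct (inverse_orbit_near p z U' Hp HU' HU'z) as [m [Hm Hnear]].
  exists m. split; auto. intros q Hq Hbq. apply NNPP; intro HnU.
  destruct (Hsep _ HnU) as [N [HN [HNq HNdis]]].
  (* some [g] near [q] (hence near [p]) has [g^{-1} z] close to [einv q z] *)
  destruct (approx_with_inverse q m [(einv q z, N)] Hq) as [g [Hg1 Hg2]].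
  - intros xu Hin. split; [apply (Hm xu Hin) | apply Hbq; auto].
  - intros xu [<-|[]]; simpl; auto.
  - pose proof (Hg2 (einv q z, N) (or_introl eq_refl)) as H. simpl in H.
    rewrite (einv_right q Hq) in H.
    exact (HNdis _ H (Hnear g Hg1)).
Qed.

Lemma einv_continuous_basic p l :
  E p -> basic_nbhd tX l (einv p) ->
  exists m, basic_nbhd tX m p /\ forall q, E q -> basic m q -> basic l (einv q).
Proof.
  intros Hp. induction l as [|[z U] l IH]; intros H.
  - exists nil. split; [intros xu []|]. intros q _ _ xu [].
  - destruct IH as [m1 [Hm1 Hm1']]. { intros xu Hin; apply H; simpl; auto. }
    destruct (H (z,U) (or_introl eq_refl)) as [HU HUz]. simpl in HU, HUz.
    destruct (einv_continuous_at p z U Hp HU HUz) as [m2 [Hm2 Hm2']].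
    exists (m1 ++ m2). split; [apply basic_nbhd_app; auto|].
    intros q Hq Hb. apply basic_app in Hb as [Hb1 Hb2].
    intros xu [<-|Hin]; [apply Hm2'; auto | apply Hm1'; auto].
Qed.

Lemma einv_continuous p W :
  E p -> pw_open tX W -> W (einv p) ->
  exists V, pw_open tX V /\ V p /\ forall q, E q -> V q -> W (einv q).
Proof.
  intros Hp HW HWi.
  destruct (HW _ HWi) as [l [Hl Hsub]].
  destruct (einv_continuous_basic p l Hp Hl) as [m [Hm1 Hm2]].
  exists (basic m). split; [apply basic_open; intros; apply Hm1; auto|].
  split; [intros xu Hin; apply Hm1; auto|].
  intros q Hq Hbq. apply Hsub, Hm2; auto.
Qed.

End Enveloping.

Theorem mainTheorem3 (T : TopGroup) (X : Type) (tX : Topology X) (act : T -> X -> X)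
  (hcomp : compact tX) (hhaus : hausdorff tX)
  (hact : continuous_action T tX act)
  (haa : forall x : X, almost_automorphic T tX act x) :
  let E := enveloping T tX act in
  (* E(X,T) is a group under composition, with identity id_X *)
  (forall p q, E p -> E q -> E (fun x => p (q x))) /\
  E (fun x => x) /\
  exists inv : (X -> X) -> (X -> X),
    (forall p, E p -> E (inv p) /\ forall x, p (inv p x) = x /\ inv p (p x) = x) /\
    (* inversion is continuous on E (subspace of the product topology on X^X) *)
    (forall p W, E p -> pw_open tX W -> W (inv p) ->
       exists V, pw_open tX V /\ V p /\ forall q, E q -> V q -> W (inv q)) /\
    (* and maps E onto E *)
    (forall q, E q -> exists p, E p /\ inv p = q).
Proof.
  intros E. destruct hact as [hact_one [hact_mul hact_cont]].
  split; [exact (E_comp T X tX act hact_mul hact_cont)|].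
  split; [exact (E_id T X tX act hact_one)|].
  exists (einv X). split; [|split].
  - intros p Hp. split; [exact (E_einv T X tX act hcomp hhaus haa p Hp)|].
    intros x. split.
    + exact (einv_right T X tX act hcomp hhaus haa p Hp x).
    + exact (einv_left T X tX act hcomp hhaus haa p Hp x).
  - exact (einv_continuous T X tX act hcomp hhaus haa).
  - intros q Hq. exists (einv X q). split.
    + exact (E_einv T X tX act hcomp hhaus haa q Hq).
    + exact (einv_involutive T X tX act hcomp hhaus haa q Hq).
Qed.
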